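(* Let $q$ be a prime power, let $n\le m$, and let $\alpha\in\mathbb{F}_{q^m}$ be a normal element, i.e. $\{\alpha^{[0]},\dots,\alpha^{[m-1]}\}$ is a basis of $\mathbb{F}_{q^m}$ over $\mathbb{F}_q$. Let $d\ge2$ and let $\mathcal{C}\subseteq\mathbb{F}_{q^m}^n$ be the Gabidulin code $\{c: \sum_{j=0}^{n-1}\alpha^{[i+j]}c_j=0,\ i=0,\dots,d-2\}$. Let $c\in\mathcal{C}$, let $e\in\mathbb{F}_{q^m}^n$ have rank $\tau\le(d-1)/2$, and let $r=c+e$. Write $e=\sum_{j=1}^{\tau}L_jV_j$ with $L_j\in\mathbb{F}_q^n$ and $V_j\in\mathbb{F}_{q^m}$, and set $X_j=L_j^Th$ where $h=(\alpha^{[0]},\dots,\alpha^{[n-1]})^T$. Define the syndromes $S_\ell=\sum_{i=0}^{n-1}\alpha^{[i+\ell]}r_i$ for $\ell=0,\dots,d-2$ and $\tilde S_\ell=S_{d-2-\ell}^{[\ell-d+2]}$ for $\ell=0,\dots,d-2$. Let $\Gamma(x)=\sum_{i=0}^{\tau}\Gamma_ix^{[i]}$ be the minimal $q$-polynomial of $\{V_1,\dots,V_\tau\}$ and $\Lambda(x)=\sum_{i=0}^{\tau}\Lambda_ix^{[i]}$ the minimal $q$-polynomial of $\{X_1,\dots,X_\tau\}$. Extend $e$ to length $m$ by $e_n=\dots=e_{m-1}=0$, let $E(x)=\sum_{j=0}^{m-1}E_jx^{[j]}$ with $E_j=\sum_{i=0}^{m-1}e_i\alpha^{[i+j]}$ be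 its $q$-transform with respect to $\alpha$, and let $\bar E(x)$ be the full $q$-reverse of $E(x)$. Then $$\Gamma(x)\otimes E(x)\equiv0 \pmod{x^{[m]}-x},\qquad \Lambda(x)\otimes\bar E(x)\equiv0 \pmod{x^{[m]}-x}.$$ In particular, $\sum_{i=0}^{\tau}\Gamma_iS_{\ell-i}^{[i]}=0$ and $\sum_{i=0}^{\tau}\Lambda_i\tilde S_{\ell-i}^{[i]}=0$ for $\ell=\tau,\dots,d-2$.
   Context: $x^{[i]}$ denotes $x^{q^i}$ (negative $i$ interpreted modulo $m$, i.e. $a^{[i]}=a^{q^{i\bmod m}}$ for $a\in\mathbb{F}_{q^m}$). The rank of $v\in\mathbb{F}_{q^m}^n$ is the rank over $\mathbb{F}_q$ of the $n\times m$ matrix whose $i$th row is the coordinate vector of $v_i$ in a fixed $\mathbb{F}_q$-basis of $\mathbb{F}_{q^m}$. A $q$-polynomial over $\mathbb{F}_{q^m}$ is $\sum_if_ix^{[i]}$ with $f_i\in\mathbb{F}_{q^m}$; its $q$-degree is the largest $i$ with $f_i\ne0$. The minimal $q$-polynomial of a set $\mathcal{S}\subseteq\mathbb{F}_{q^m}$ is the unique $q$-polynomial $M(x)=\sum_{i=0}^tM_ix^{[i]}$ with $M_0=1$ and least $q$-degree $t$ whose roots include $\mathcal{S}$. Symbolic multiplication is composition $f(x)\otimes g(x)=f(g(x))$, and reduction modulo $x^{[m]}-x$ is the remainder upon division by $x^{q^m}-x$. Coefficients of length-$m$ sequences are indexed cyclically ($f_i=f_{i\bmod m}$), and the full $q$-reverse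 of $f(x)=\sum_{i=0}^{m-1}f_ix^{[i]}$ is $\bar f(x)=\sum_{i=0}^{m-1}f_{-i}^{[i]}x^{[i]}$. *)

From HB Require Import structures.
From mathcomp Require Import all_boot all_order all_algebra all_field.
Set Implicit Arguments. Unset Strict Implicit. Unset Printing Implicit Defensive.
Import GRing.Theory.
Local Open Scope ring_scope.

Section Defs.
Variables (F : finFieldType) (L : fieldExtType F).

Definition qq : nat := #|F|.
Definition mm : nat := \dim {:L}.

Definition fr (i : nat) (x : L) : L := x ^+ (qq ^ i).

Definition normal_elt (a : L) : Prop :=
  basis_of fullv [seq fr i a | i <- iota 0 mm].

Definition qrank (n : nat) (v : 'I_n -> L) : nat :=
  \rank (\matrix_(i < n, k < \dim (fullv : {vspace L}))
           coord (vbasis (fullv : {vspace L})) k (v i)).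

(* q-polynomials are represented as ordinary polynomials
   sum_i f_i X^(q^i); coefficient f_i is f`_(q^i). *)
Definition qpoly (f : {poly L}) : Prop :=
  forall k, (forall i, k <> (qq ^ i)%N) -> f`_k = 0.

Definition qcoef (f : {poly L}) (i : nat) : L := f`_(qq ^ i).

Definition qdeg (f : {poly L}) : nat :=
  \max_(i < size f | qcoef f i != 0) i.

Definition min_qpoly (S : L -> Prop) (M : {poly L}) : Prop :=
  [/\ qpoly M, qcoef M 0 = 1, (forall s, S s -> root M s) &
      forall f : {poly L}, qpoly f -> qcoef f 0 = 1 ->
        (forall s, S s -> root f s) -> (qdeg M <= qdeg f)%N].

Definition qpoly_of (g : nat -> L) : {poly L} :=
  \sum_(i < mm) g i *: 'X^(qq ^ i).

Definition gabidulin (n d : nat) (a : L) (c : 'I_n -> L) : Prop :=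
  forall i : nat, (i <= d - 2)%N -> \sum_(j < n) fr (i + j) a * c j = 0.

(* q-transform of e (extended by zeros to length m) w.r.t. alpha *)
Definition qtrans_coef (n : nat) (a : L) (e : 'I_n -> L) (j : nat) : L :=
  \sum_(i < n) e i * fr (i + j) a.

Definition qtrans (n : nat) (a : L) (e : 'I_n -> L) : {poly L} :=
  qpoly_of (qtrans_coef a e).

(* full q-reverse: bar f_i = f_{-i mod m}^[i] *)
Definition qrev_full (g : nat -> L) : {poly L} :=
  qpoly_of (fun i => fr i (g ((mm - i %% mm) %% mm)%N)).

Definition synd (n : nat) (a : L) (r : 'I_n -> L) (l : nat) : L :=
  \sum_(i < n) fr (i + l) a * r i.

(* tilde S_l = S_{d-2-l}^[l-d+2], exponent taken modulo m *)
Definition synd_tilde (n d : nat) (a : L) (r : 'I_n -> L) (l : nat) : L :=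
  fr ((mm - (d - 2 - l) %% mm) %% mm) (synd a r (d - 2 - l)).

End Defs.

(* Writing e = sum_k L_k V_k, the q-transform coefficients factor as
   E_j = sum_k V_k X_k^[j], so E(x) = sum_k V_k Tr(X_k x) and
   Ebar(x) = sum_k X_k Tr(V_k x), with Tr the trace of L over F.  Traces lie
   in F and q-polynomials are F-linear, hence Gamma(E(x)) = 0 and
   Lambda(Ebar(x)) = 0 for every x in L; a polynomial vanishing on all of L
   is divisible by x^[m] - x.  Since c is a codeword, S_l = E_l for l <= d-2,
   and the key equations become the coefficientwise forms of Gamma(V_k) = 0
   and Lambda(X_k) = 0.  Both minimal q-polynomials have q-degree at most tau,
   as tau points always have an annihilating q-polynomial of q-degree tau. *)

From Pilot Require Import Defs.
From HB Require Import structures.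
From mathcomp Require Import all_boot all_order all_algebra all_field.
From Stdlib Require Import Classical.
From mathcomp Require Import zify.
Import GRing.Theory.
Local Open Scope ring_scope.
Set Implicit Arguments. Unset Strict Implicit.

Section Frobenius.
Variables (F : finFieldType) (L : fieldExtType F).
Local Notation q := (qq F).
Local Notation m := (mm L).
Local Notation fr := (@fr F L).

Lemma qq_gt1 : (1 < q)%N.
Proof. exact: finNzRing_gt1. Qed.

Lemma mm_gt0 : (0 < m)%N.
Proof. exact: (adim_gt0 (aspacef L)). Qed.

Lemma exprqD (x y : L) : (x + y) ^+ q = x ^+ q + y ^+ q.
Proof.
rewrite /qq; have [p _ pcharFp] := finPcharP F.
have pcharLp : p \in [pchar L] by rewrite pchar_lalg.
rewrite (card_pprimeChar pcharFp); elim: (logn _ _) => [|k IHk].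
  by rewrite !expr1.
by rewrite expnSr !exprM {}IHk -!(pFrobenius_autE pcharLp) rmorphD.
Qed.

Lemma fr_id (x : L) : fr 0 x = x.
Proof. by rewrite /Defs.fr expr1. Qed.

Lemma fr1 (x : L) : fr 1 x = x ^+ q.
Proof. by rewrite /Defs.fr expn1. Qed.

Lemma fr_comp i j (x : L) : fr i (fr j x) = fr (j + i) x.
Proof. by rewrite /Defs.fr -exprM -expnD. Qed.

Lemma frD i (x y : L) : fr i (x + y) = fr i x + fr i y.
Proof.
elim: i => [|i IH]; first by rewrite !fr_id.
by rewrite -addn1 -!fr_comp IH !fr1 exprqD.
Qed.

Lemma frM i (x y : L) : fr i (x * y) = fr i x * fr i y.
Proof. by rewrite /Defs.fr exprMn. Qed.

Lemma fr0 i : fr i 0 = 0.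
Proof.
by rewrite /Defs.fr expr0n expn_eq0 (negbTE (lt0n_neq0 (ltnW qq_gt1))).
Qed.

Lemma fr_sum i (I : Type) (r : seq I) (P : pred I) (G : I -> L) :
  fr i (\sum_(j <- r | P j) G j) = \sum_(j <- r | P j) fr i (G j).
Proof. exact: (big_morph _ (frD i) (fr0 i)). Qed.

Lemma fr_alg i (a : F) : fr i a%:A = a%:A.
Proof.
elim: i => [|i IH]; first by rewrite fr_id.
by rewrite -addn1 -fr_comp IH fr1 -in_algE -rmorphXn /qq expf_card.
Qed.

Lemma frZ i (a : F) (x : L) : fr i (a *: x) = a *: fr i x.
Proof. by rewrite -[a *: x]mulr_algl frM fr_alg mulr_algl. Qed.

Lemma card_L : #|FinFieldExtType L| = (q ^ m)%N.
Proof.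
have := @card_vspace F (FinFieldExtType L) (Vector.class L) fullv.
by rewrite (@card_vspacef F (FinFieldExtType L) (Vector.class L)).
Qed.

Lemma fr_mm (x : L) : fr m x = x.
Proof. by rewrite /Defs.fr -card_L (expf_card (x : FinFieldExtType L)). Qed.

Lemma fr_mulm c (x : L) : fr (c * m) x = x.
Proof.
elim: c => [|c IH]; first by rewrite fr_id.
by rewrite mulSn addnC -fr_comp IH fr_mm.
Qed.

(* The residue of [-s] modulo [m], in the form used by [qrev_full] and
   [synd_tilde]. *)
Definition negm (s : nat) : nat := ((m - s %% m) %% m)%N.

Lemma fr_negm_addK s (x : L) : fr (negm s + s) x = x.
Proof.
have dvd_m : (m %| negm s + s)%N.
  rewrite /dvdn /negm modnDml -modnDmr subnK ?modnn //.
  by rewrite ltnW // ltn_pmod // mm_gt0.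
by rewrite -(divnK dvd_m) fr_mulm.
Qed.

Lemma fr_negmK s (x : L) : fr (negm s) (fr s x) = x.
Proof. by rewrite fr_comp addnC fr_negm_addK. Qed.

Lemma fr_negm_shift s i (x : L) : fr (negm (s + i) + i) x = fr (negm s) x.
Proof.
rewrite -{1}(fr_negm_addK s x) fr_comp.
have -> : (negm s + s + (negm (s + i) + i) = negm (s + i) + (s + i) + negm s)%N.
  by lia.
by rewrite -fr_comp fr_negm_addK.
Qed.
End Frobenius.

Section Trace.
Variables (F : finFieldType) (L : fieldExtType F).
Local Notation q := (qq F).
Local Notation m := (mm L).
Local Notation fr := (@fr F L).

Lemma frq_fixed_in_F (x : L) : x ^+ q = x -> exists a : F, x = a%:A.
Proof.
move=> xFx; pose p := map_poly (in_alg L) ('X^#|F| - 'X).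
have: root p x.
  rewrite /p rmorphB /= map_polyXn map_polyX.
  by rewrite rootE !(hornerE, hornerXn) [x ^+ _]xFx subrr.
have ->: p = \prod_(z <- [seq b%:A | b : F]) ('X - z%:P).
  rewrite /p finField_genPoly rmorph_prod big_image /=.
  by apply: eq_bigr => b _; rewrite rmorphB /= map_polyX map_polyC.
by rewrite root_prod_XsubC => /mapP[a]; exists a.
Qed.

Definition qtrace (y : L) : L := \sum_(j < m) fr j y.

Lemma qtrace_in_F (y : L) : exists a : F, qtrace y = a%:A.
Proof.
apply: frq_fixed_in_F; rewrite -fr1 /qtrace fr_sum.
have := fr_mm y; have := @mm_gt0 F L; case: (mm L) => // k _ frky.
rewrite big_ord_recr big_ord_recl /= fr_id.
under eq_bigr do rewrite fr_comp addn1.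
by rewrite fr_comp addn1 frky addrC.
Qed.
End Trace.

Section QPolynomials.
Variables (F : finFieldType) (L : fieldExtType F).
Local Notation q := (qq F).
Local Notation m := (mm L).
Local Notation fr := (@fr F L).

(* A nonzero remainder modulo [X^(q^m) - X] has fewer than [#|L| = q^m]
   roots. *)
Lemma modp_Xqm_subX_eq0 (P : {poly L}) :
  (forall x, P.[x] = 0) -> P %% ('X^(q ^ m) - 'X) = 0.
Proof.
move=> P0; set M := 'X^(q ^ m) - 'X.
have qm_gt1 : (1 < q ^ m)%N.
  by rewrite -{1}(expn0 q) ltn_exp2l ?qq_gt1 ?mm_gt0.
have sizeM : size M = (q ^ m).+1.
  by rewrite /M size_polyDl ?size_polyXn // size_polyN size_polyX ltnS.
have M0 x : M.[x] = 0 by rewrite /M !hornerE -[x ^+ _]/(fr m x) fr_mm subrr.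
have R0 x : (P %% M).[x] = 0.
  by rewrite -(P0 x) {2}(divp_eq P M) hornerD hornerM M0 mulr0 add0r.
apply/eqP; apply: contraT => R_neq0.
have := @max_poly_roots _ (P %% M) (enum (FinFieldExtType L)) R_neq0.
have rootsR : all (root (P %% M)) (enum (FinFieldExtType L)).
  by apply/allP => x _; rewrite /root R0.
have -> : size (enum (FinFieldExtType L)) = (q ^ m)%N by rewrite -card_L cardT.
move=> /(_ rootsR (enum_uniq _)).
by rewrite ltnNge -ltnS -sizeM ltn_modp -size_poly_gt0 sizeM.
Qed.

Lemma qpoly_hornerD (P : {poly L}) x y :
  Defs.qpoly P -> P.[x + y] = P.[x] + P.[y].
Proof.
move=> qP; rewrite !horner_coef -big_split /=; apply: eq_bigr => k _.
have [[i ->]|not_pow] := classic (exists i, nat_of_ord k = (q ^ i)%N).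
  by rewrite -![_ ^+ (q ^ i)]/(fr i _) frD mulrDr.
by rewrite qP ?mul0r ?addr0 // => i ki; apply: not_pow; exists i.
Qed.

Lemma qpoly_hornerZ (P : {poly L}) (a : F) x :
  Defs.qpoly P -> P.[a *: x] = a *: P.[x].
Proof.
move=> qP; rewrite !horner_coef scaler_sumr; apply: eq_bigr => k _.
have [[i ->]|not_pow] := classic (exists i, nat_of_ord k = (q ^ i)%N).
  by rewrite -![_ ^+ (q ^ i)]/(fr i _) frZ scalerAr.
by rewrite qP ?mul0r ?scaler0 // => i ki; apply: not_pow; exists i.
Qed.

Lemma qpoly_root_Fspan (P : {poly L}) k (W t : 'I_k -> L) :
  Defs.qpoly P -> (forall j, P.[W j] = 0) ->
  (forall j, exists b : F, t j = b%:A) ->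
  P.[\sum_(j < k) W j * t j] = 0.
Proof.
move=> qP PW tF; apply: (big_rec (fun s => P.[s] = 0)).
  by have := qpoly_hornerZ (0 : F) 0 qP; rewrite !scale0r.
move=> j s _ Ps; have [b ->] := tF j.
by rewrite qpoly_hornerD // Ps mulr_algr qpoly_hornerZ // PW scaler0 addr0.
Qed.

Definition qpoly_upto (a : nat -> L) (k : nat) : {poly L} :=
  \sum_(i < k.+1) a i *: 'X^(q ^ i).

Lemma coef_qpoly_upto a k j :
  (qpoly_upto a k)`_j = \sum_(i < k.+1) a i * (j == (q ^ i)%N)%:R.
Proof. by rewrite coef_sum; apply: eq_bigr => i _; rewrite coefZ coefXn. Qed.

Lemma qpoly_upto_qpoly a k : Defs.qpoly (qpoly_upto a k).
Proof.
move=> j not_pow; rewrite coef_qpoly_upto big1 // => i _.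
by rewrite (introF eqP (not_pow i)) mulr0.
Qed.

Lemma qcoef_qpoly_upto a k i :
  qcoef (qpoly_upto a k) i = if (i <= k)%N then a i else 0.
Proof.
rewrite /qcoef coef_qpoly_upto.
under eq_bigr => j _ do rewrite eqn_exp2l ?qq_gt1 //.
case: ifP => [i_le_k|i_gt_k].
  rewrite (bigD1 (Ordinal (i_le_k : (i < k.+1)%N))) //= eqxx mulr1.
  rewrite big1 ?addr0 // => j.
  by rewrite -val_eqE /= eq_sym => /negbTE ->; rewrite mulr0.
rewrite big1 // => j _; case: eqP => [e|]; last by rewrite mulr0.
by move: i_gt_k; rewrite e -ltnS ltn_ord.
Qed.

Lemma horner_qpoly_upto a k x :
  (qpoly_upto a k).[x] = \sum_(i < k.+1) a i * fr i x.
Proof.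
by rewrite horner_sum; apply: eq_bigr => i _; rewrite hornerZ hornerXn.
Qed.

Lemma qdeg_qpoly_upto a k : (qdeg (qpoly_upto a k) <= k)%N.
Proof.
apply/bigmax_leqP => i; rewrite qcoef_qpoly_upto.
by case: ifP => //; rewrite eqxx.
Qed.

Lemma qpoly_uptoE (P : {poly L}) k : Defs.qpoly P ->
  (forall i, (k < i)%N -> qcoef P i = 0) -> P = qpoly_upto (qcoef P) k.
Proof.
move=> qP Pk; apply/polyP => j.
have [[i ->]|not_pow] := classic (exists i, j = (q ^ i)%N).
  change (qcoef P i = qcoef (qpoly_upto (qcoef P) k) i).
  rewrite qcoef_qpoly_upto.
  by case: leqP => // /Pk.
by rewrite qP ?qpoly_upto_qpoly // => i ji; apply: not_pow; exists i.
Qed.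

Lemma horner_qpoly_upto_subfrob a k (c x : L) : a k.+1 = 0 ->
  (qpoly_upto (fun i => a i - c * (if i is j.+1 then a j ^+ q else 0)) k.+1).[x]
  = (qpoly_upto a k).[x] - c * (qpoly_upto a k).[x] ^+ q.
Proof.
move=> ak0; rewrite !horner_qpoly_upto -fr1 fr_sum.
under eq_bigr do rewrite mulrBl.
rewrite sumrB big_ord_recr /= ak0 mul0r addr0; congr (_ - _).
rewrite big_ord_recl /= mulr0 mul0r add0r mulr_sumr.
by apply: eq_bigr => i _; rewrite frM fr_comp fr1 addn1 mulrA.
Qed.

(* From a q-polynomial [P] vanishing on [s], the q-polynomial
   [P - (P v)^(1-q) P^q] vanishes on [v :: s] and has q-degree one more. *)
Lemma qannihilator_exists (s : seq L) : exists a : nat -> L,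
  [/\ a 0%N = 1, forall i, (size s < i)%N -> a i = 0 &
      forall v, v \in s -> (qpoly_upto a (size s)).[v] = 0].
Proof.
elim: s => [|v s [a [a0 a_gt av]]].
  by exists (fun i => if i == 0%N then 1 else 0); split => // -[].
set y := (qpoly_upto a (size s)).[v]; set c := y / y ^+ q.
have q_neq0 : (q != 0)%N by rewrite -lt0n ltnW ?qq_gt1.
exists (fun i => a i - c * (if i is j.+1 then a j ^+ q else 0)); split.
- by rewrite a0 mulr0 subr0.
- move=> [|i] /= i_gt; first by [].
  by rewrite !a_gt ?expr0n ?(negbTE q_neq0) ?mulr0 ?subrr // (ltn_trans _ i_gt).
move=> x; rewrite inE horner_qpoly_upto_subfrob ?a_gt //.
case/orP => [/eqP ->|/av ->]; last first.
  by rewrite expr0n (negbTE q_neq0) mulr0 subrr.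
rewrite /c -/y; have [->|y_neq0] := eqVneq y 0; first by rewrite !mul0r subrr.
by rewrite divfK ?subrr // expf_neq0.
Qed.

Lemma min_qpoly_upto (S : L -> Prop) (M : {poly L}) (s : seq L) :
  min_qpoly S M -> (forall x, S x -> x \in s) ->
  M = qpoly_upto (qcoef M) (size s).
Proof.
move=> [qM _ _ M_min] S_s; have [a [a0 a_gt av]] := qannihilator_exists s.
have qdegM : (qdeg M <= size s)%N.
  apply: leq_trans (qdeg_qpoly_upto a (size s)).
  apply: M_min; first exact: qpoly_upto_qpoly.
    by rewrite qcoef_qpoly_upto leq0n.
  by move=> x /S_s xs; rewrite /root av.
apply: qpoly_uptoE => // i i_gt; rewrite /qcoef.
have [i_lt|i_ge] := ltnP i (size M); last first.
  by rewrite nth_default // (leq_trans i_ge) // ltnW // ltn_expl // qq_gt1.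
apply/eqP; apply: contraTT i_gt => Mi_neq0; rewrite -leqNgt.
exact: leq_trans (leq_bigmax_cond (Ordinal i_lt) Mi_neq0) qdegM.
Qed.

Lemma min_qpoly_family_upto t (W : 'I_t -> L) (M : {poly L}) :
  min_qpoly (fun x => exists j, x = W j) M -> M = qpoly_upto (qcoef M) t.
Proof.
move=> minM; rewrite {1}(min_qpoly_upto (s := [seq W j | j <- enum 'I_t]) minM).
  by rewrite size_map size_enum_ord.
by move=> x [j ->]; rewrite map_f ?mem_enum.
Qed.
End QPolynomials.

Section ErrorSpan.
Variables (F : finFieldType) (L : fieldExtType F).
Local Notation q := (qq F).
Local Notation m := (mm L).
Local Notation fr := (@fr F L).

Variables (tau : nat) (V X : 'I_tau -> L) (E : nat -> L).
Hypothesis E_span : forall j, E j = \sum_(k < tau) V k * fr j (X k).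

Lemma horner_qpoly_of_span x :
  (qpoly_of E).[x] = \sum_(k < tau) V k * qtrace (X k * x).
Proof.
rewrite horner_sum; under eq_bigr do rewrite hornerZ hornerXn E_span mulr_suml.
rewrite exchange_big; apply: eq_bigr => k _; rewrite mulr_sumr.
by apply: eq_bigr => i _; rewrite frM mulrA.
Qed.

Lemma horner_qrev_full_span x :
  (qrev_full E).[x] = \sum_(k < tau) X k * qtrace (V k * x).
Proof.
rewrite horner_sum.
under eq_bigr do rewrite hornerZ hornerXn E_span fr_sum mulr_suml.
rewrite exchange_big; apply: eq_bigr => k _; rewrite mulr_sumr.
apply: eq_bigr => i _; rewrite !frM fr_comp -[(_ + i)%N]/(negm L i + i)%N.
by rewrite fr_negm_addK mulrCA mulrA.
Qed.

Lemma qpoly_of_span_comp_modp (P : {poly L}) :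
  Defs.qpoly P -> (forall k, P.[V k] = 0) ->
  (P \Po qpoly_of E) %% ('X^(q ^ m) - 'X) = 0.
Proof.
move=> qP PV; apply: modp_Xqm_subX_eq0 => x.
rewrite horner_comp horner_qpoly_of_span qpoly_root_Fspan // => k.
exact: qtrace_in_F.
Qed.

Lemma qrev_full_span_comp_modp (P : {poly L}) :
  Defs.qpoly P -> (forall k, P.[X k] = 0) ->
  (P \Po qrev_full E) %% ('X^(q ^ m) - 'X) = 0.
Proof.
move=> qP PX; apply: modp_Xqm_subX_eq0 => x.
rewrite horner_comp horner_qrev_full_span qpoly_root_Fspan // => k.
exact: qtrace_in_F.
Qed.

Lemma key_equation_span g t l :
  (forall k, (qpoly_upto g t).[V k] = 0) -> (t <= l)%N ->
  \sum_(i < t.+1) g i * fr i (E (l - i)) = 0.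
Proof.
move=> PV t_le_l; under eq_bigr do rewrite E_span fr_sum mulr_sumr.
rewrite exchange_big big1 // => k _.
transitivity ((qpoly_upto g t).[V k] * fr l (X k)); last by rewrite PV mul0r.
rewrite horner_qpoly_upto mulr_suml.
apply: eq_bigr => i _; have i_le_l : (i <= l)%N.
  by rewrite (leq_trans _ t_le_l) // -ltnS.
by rewrite frM fr_comp subnK // mulrA.
Qed.

Lemma key_equation_span_rev g t s :
  (forall k, (qpoly_upto g t).[X k] = 0) ->
  \sum_(i < t.+1) g i * fr i (fr (negm L (s + i)) (E (s + i))) = 0.
Proof.
move=> PX; under eq_bigr do rewrite E_span !fr_sum mulr_sumr.
rewrite exchange_big big1 // => k _.
transitivity (fr (negm L s) (V k) * (qpoly_upto g t).[X k]).
  rewrite horner_qpoly_upto mulr_sumr; apply: eq_bigr => i _.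
  by rewrite frM fr_negmK frM fr_comp fr_negm_shift mulrCA.
by rewrite PX mulr0.
Qed.
End ErrorSpan.

Section RankDecomposition.
Variables (F : finFieldType) (L : fieldExtType F).
Local Notation fr := (@fr F L).

Lemma qtrans_coef_span n tau (a : L) (e : 'I_n -> L)
    (Lc : 'I_tau -> 'I_n -> F) (V : 'I_tau -> L) :
  (forall i, e i = \sum_(j < tau) Lc j i *: V j) ->
  forall j, qtrans_coef a e j
    = \sum_(k < tau) V k * fr j (\sum_(i < n) Lc k i *: fr i a).
Proof.
move=> e_span j; rewrite /qtrans_coef.
under eq_bigr do rewrite e_span mulr_suml.
rewrite exchange_big; apply: eq_bigr => k _.
rewrite fr_sum mulr_sumr; apply: eq_bigr => i _.
by rewrite frZ fr_comp -scalerAl scalerAr.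
Qed.

Lemma synd_codeword_add n d (a : L) (c e : 'I_n -> L) j :
  gabidulin d a c -> (j <= d - 2)%N ->
  synd a (fun i => c i + e i) j = qtrans_coef a e j.
Proof.
move=> c_code j_le; rewrite /synd /qtrans_coef.
have c_synd0 : \sum_(i < n) fr (i + j) a * c i = 0.
  by rewrite -[RHS](c_code j j_le); apply: eq_bigr => i _; rewrite addnC.
under eq_bigr do rewrite mulrDr.
rewrite big_split /= c_synd0 add0r.
by apply: eq_bigr => i _; rewrite mulrC.
Qed.
End RankDecomposition.

Unset Implicit Arguments.
Set Strict Implicit.

Theorem theorem2 (F : finFieldType) (L : fieldExtType F)
  (n d tau : nat) (alpha : L)
  (c e : 'I_n -> L) (Lc : 'I_tau -> 'I_n -> F) (V : 'I_tau -> L)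
  (Gamma Lambda : {poly L}) :
  (n <= mm L)%N ->
  normal_elt alpha ->
  (2 <= d)%N ->
  gabidulin d alpha c ->
  qrank e = tau ->
  (tau.*2 <= d - 1)%N ->
  (forall i, e i = \sum_(j < tau) Lc j i *: V j) ->
  min_qpoly (fun x => exists j, x = V j) Gamma ->
  min_qpoly (fun x => exists j,
               x = \sum_(i < n) Lc j i *: fr i alpha) Lambda ->
  let r := fun i => c i + e i in
  (Gamma \Po qtrans alpha e) %% ('X^(qq F ^ mm L) - 'X) = 0 /\
  (Lambda \Po qrev_full (qtrans_coef alpha e)) %% ('X^(qq F ^ mm L) - 'X) = 0 /\
  (forall l, (tau <= l <= d - 2)%N ->
     \sum_(i < tau.+1) qcoef Gamma i * fr i (synd alpha r (l - i)) = 0) /\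
  (forall l, (tau <= l <= d - 2)%N ->
     \sum_(i < tau.+1) qcoef Lambda i * fr i (synd_tilde d alpha r (l - i)) = 0).
Proof.
move=> _ _ _ c_code _ _ e_span minGamma minLambda r.
pose X k := \sum_(i < n) Lc k i *: fr i alpha.
have E_span : forall j, qtrans_coef alpha e j = \sum_(k < tau) V k * fr j (X k).
  exact: qtrans_coef_span.
have [qGamma _ GammaV _] := minGamma; have [qLambda _ LambdaX _] := minLambda.
have GammaV0 k : Gamma.[V k] = 0 by apply/eqP/GammaV; exists k.
have LambdaX0 k : Lambda.[X k] = 0 by apply/eqP/LambdaX; exists k.
have Gamma_uptoV0 k : (qpoly_upto (qcoef Gamma) tau).[V k] = 0.
  by rewrite -(min_qpoly_family_upto minGamma).
have Lambda_uptoX0 k : (qpoly_upto (qcoef Lambda) tau).[X k] = 0.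
  by rewrite -(min_qpoly_family_upto minLambda).
split; [|split; [|split]] => [||l /andP[tau_le_l l_le]|l /andP[tau_le_l l_le]].
- exact: (qpoly_of_span_comp_modp E_span qGamma GammaV0).
- exact: (qrev_full_span_comp_modp E_span qLambda LambdaX0).
- rewrite -[RHS](key_equation_span E_span Gamma_uptoV0 tau_le_l).
  apply: eq_bigr => i _; rewrite (synd_codeword_add e c_code) //.
  by rewrite (leq_trans _ l_le) ?leq_subr.
- rewrite -[RHS](key_equation_span_rev E_span (d - 2 - l) Lambda_uptoX0).
  apply: eq_bigr => i _; have i_le_l : (i <= l)%N.
    by rewrite (leq_trans _ tau_le_l) // -ltnS.
  have shift : (d - 2 - (l - i) = d - 2 - l + i)%N by lia.
  by rewrite /synd_tilde shift (synd_codeword_add e c_code) //; lia.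
Qed.
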